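(* For every program $P$, state $s$ and natural number $n$, $$\mathrm{conv}\,F_n(P,s)=\{\mu\mid \langle P,s\rangle\Downarrow^{\mathcal S,n}\mu\ \text{for some scheduler }\mathcal S\},$$ where $\mathrm{conv}$ denotes the convex hull (set of finite convex combinations).
   Context: Fix a set $S$ of states. For a set $X$, $\mathcal V_{=1,\omega}(X)$ (resp. $\mathcal V_{\le1,\omega}(X)$) is the set of finitely supported probability (resp. subprobability) distributions on $X$, written as finite formal sums $\sum_i p_i\cdot x_i$; $\bot$ is the zero distribution and $1\cdot x=\delta_x$ the point mass; ordered, added and scaled pointwise. For each atomic program $\mathtt a$ a function $[\![\mathtt a]\!]:S\to\mathcal V_{=1,\omega}(S)$ is given, and for each condition $\mathtt b$ a function $[\![\mathtt b]\!]:S\to\{\mathtt{tt},\mathtt{ff}\}$. Programs: $P::=\mathtt{skip}\mid\mathtt a\mid P;P\mid P\parallel P\mid P+_{\mathtt p}P\mid P+P\mid\mathtt{if}\ \mathtt b\ \mathtt{then}\ P\ \mathtt{else}\ P\mid\mathtt{while}\ \mathtt b\ P$ ($\mathtt p\in[0,1]\cap\mathbb Q$). The small-step relation $\longrightarrow\subseteq(\mathrm{Pr}\times S)\times\mathcal V_{=1,\omega}(S+\mathrm{Pr}\times S)$ is the least relation closed under: $\langle\mathtt a,s\rangle\to[\![\mathtt a]\!](s)$; $\langle\mathtt{skip},s\rangle\to1\cdot s$; if $\langle P,s\rangle\to\sum_ip_i\langle P_i,s_i\rangle+\sum_jp_j s_j$ then $\langle P;Q,s\rangle\to\sum_ip_i\langle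 P_i;Q,s_i\rangle+\sum_jp_j\langle Q,s_j\rangle$ and $\langle P\parallel Q,s\rangle\to\sum_ip_i\langle P_i\parallel Q,s_i\rangle+\sum_jp_j\langle Q,s_j\rangle$; if $\langle Q,s\rangle\to\sum_ip_i\langle Q_i,s_i\rangle+\sum_jp_js_j$ then $\langle P\parallel Q,s\rangle\to\sum_ip_i\langle P\parallel Q_i,s_i\rangle+\sum_jp_j\langle P,s_j\rangle$; if $\langle P,s\rangle\to\mu$ and $\langle Q,s\rangle\to\nu$ then $\langle P+_{\mathtt p}Q,s\rangle\to\mathtt p\cdot\mu+(1-\mathtt p)\cdot\nu$; if $\langle P,s\rangle\to\mu$ or $\langle Q,s\rangle\to\mu$ then $\langle P+Q,s\rangle\to\mu$; $\langle\mathtt{if}\ \mathtt b\ \mathtt{then}\ P\ \mathtt{else}\ Q,s\rangle\to1\cdot\langle P,s\rangle$ if $[\![\mathtt b]\!](s)=\mathtt{tt}$, $\to1\cdot\langle Q,s\rangle$ otherwise; $\langle\mathtt{while}\ \mathtt b\ P,s\rangle\to1\cdot\langle P;\mathtt{while}\ \mathtt b\ P,s\rangle$ if $[\![\mathtt b]\!](s)=\mathtt{tt}$, $\to1\cdot s$ otherwise. Write $\langle P,s\rangle\!\longrightarrow=\{\mu\mid\langle P,s\rangle\to\mu\}$. Let $I=((\mathrm{Pr}\times S)\times\mathcal V_{=1,\omega}(S+\mathrm{Pr}\times S))^*\times(\mathrm{Pr}\times S)$, elements written $h\langle P,s\rangle$ ($h$ a history; juxtaposition extends histories). A scheduler is a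 partial function $\mathcal S:I\rightharpoonup\mathcal V_{=1,\omega}(S+\mathrm{Pr}\times S)$ whose value at $h\langle P,s\rangle$, when defined, is a finite convex combination of elements of $\langle P,s\rangle\!\longrightarrow$. Big-step: $h\langle P,s\rangle\Downarrow^{\mathcal S,0}\bot$; and $h\langle P,s\rangle\Downarrow^{\mathcal S,n+1}\sum_kp_k(\sum_ip_{k,i}\mu_{k,i}+\sum_jp_{k,j}s_{k,j})$ whenever $\mathcal S(h\langle P,s\rangle)=\sum_kp_k\nu_k$ with $\nu_k=\sum_ip_{k,i}\langle P_{k,i},s_{k,i}\rangle+\sum_jp_{k,j}s_{k,j}\in\langle P,s\rangle\!\longrightarrow$ and $h\langle P,s\rangle\nu_k\langle P_{k,i},s_{k,i}\rangle\Downarrow^{\mathcal S,n}\mu_{k,i}$ for all $k,i$; with empty history we write $\langle P,s\rangle\Downarrow^{\mathcal S,n}\mu$. Finite sets $F_n(P,s)\subseteq\mathcal V_{\le1,\omega}(S)$ are defined by $F_0(P,s)=\{\bot\}$ and $F_{n+1}(P,s)=\bigcup\{\sum_ip_i\cdot F_n(P_i,s_i)+\sum_jp_j\cdot\delta_{s_j}\mid\langle P,s\rangle\to\sum_ip_i\langle P_i,s_i\rangle+\sum_jp_js_j\}$, with Minkowski sums and scalings of sets. *)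

From Stdlib Require Import Reals List QArith Qreals ClassicalEpsilon.
Import ListNotations.
Open Scope R_scope.

Definition eqb_cl {T : Type} (x y : T) : bool :=
  if excluded_middle_informative (x = y) then true else false.

Definition sumR (l : list R) : R := fold_right Rplus 0 l.

(* Finitely supported (sub)distributions are represented as functions X -> R.
   [enum_supp mu l]: l enumerates (without repetition) exactly the support of mu. *)
Definition enum_supp {X : Type} (mu : X -> R) (l : list X) : Prop :=
  NoDup l /\ forall x, In x l <-> mu x <> 0.

Definition is_fdist {X : Type} (mu : X -> R) : Prop :=
  (forall x, 0 <= mu x) /\ exists l, enum_supp mu l /\ sumR (map mu l) = 1.

Definition delta {X : Type} (x : X) : X -> R := fun y => if eqb_cl x y then 1 else 0.

Definition is_push {X Y : Type} (f : X -> Y) (mu : X -> R) (nu : Y -> R) : Prop :=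
  exists l, enum_supp mu l /\
    forall y, nu y = sumR (map (fun x => if eqb_cl (f x) y then mu x else 0) l).

Section Lang.
Variables (St A B : Type).

Definition prob := { q : Q | (0 <= q <= 1)%Q }.

Inductive prog : Type :=
| Skip : prog
| Atom : A -> prog
| Seq : prog -> prog -> prog
| Par : prog -> prog -> prog
| PChoice : prob -> prog -> prog -> prog
| NChoice : prog -> prog -> prog
| Ite : B -> prog -> prog -> prog
| While : B -> prog -> prog.

Definition X := (St + (prog * St))%type.

Variable semA : A -> St -> St -> R.
Variable semB : B -> St -> bool.

Definition seq_map (Q : prog) (x : X) : X :=
  match x with inl t => inr (Q, t) | inr (P', t) => inr (Seq P' Q, t) end.
Definition parl_map (Q : prog) (x : X) : X :=
  match x with inl t => inr (Q, t) | inr (P', t) => inr (Par P' Q, t) end.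
Definition parr_map (P : prog) (x : X) : X :=
  match x with inl t => inr (P, t) | inr (Q', t) => inr (Par P Q', t) end.

Inductive step : prog -> St -> (X -> R) -> Prop :=
| st_atom : forall a s,
    step (Atom a) s (fun x => match x with inl t => semA a s t | inr _ => 0 end)
| st_skip : forall s, step Skip s (delta (inl s))
| st_seq : forall P Q s mu nu,
    step P s mu -> is_push (seq_map Q) mu nu -> step (Seq P Q) s nu
| st_parl : forall P Q s mu nu,
    step P s mu -> is_push (parl_map Q) mu nu -> step (Par P Q) s nu
| st_parr : forall P Q s mu nu,
    step Q s mu -> is_push (parr_map P) mu nu -> step (Par P Q) s nu
| st_pchoice : forall (p : prob) P Q s mu nu,
    step P s mu -> step Q s nu ->
    step (PChoice p P Q) s
      (fun x => Q2R (proj1_sig p) * mu x + (1 - Q2R (proj1_sig p)) * nu x)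
| st_nchoice_l : forall P Q s mu, step P s mu -> step (NChoice P Q) s mu
| st_nchoice_r : forall P Q s mu, step Q s mu -> step (NChoice P Q) s mu
| st_if_tt : forall b P Q s, semB b s = true -> step (Ite b P Q) s (delta (inr (P, s)))
| st_if_ff : forall b P Q s, semB b s = false -> step (Ite b P Q) s (delta (inr (Q, s)))
| st_while_tt : forall b P s, semB b s = true ->
    step (While b P) s (delta (inr (Seq P (While b P), s)))
| st_while_ff : forall b P s, semB b s = false -> step (While b P) s (delta (inl s)).

Definition hist := list ((prog * St) * (X -> R)).

Definition scheduler := hist -> prog -> St -> option (X -> R).

Definition conv_step (P : prog) (s : St) (nu : X -> R) : Prop :=
  exists ws : list (R * (X -> R)),
    Forall (fun w => 0 <= fst w /\ step P s (snd w)) ws /\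
    sumR (map fst ws) = 1 /\
    forall x, nu x = sumR (map (fun w => fst w * snd w x) ws).

Definition valid_scheduler (sch : scheduler) : Prop :=
  forall h P s nu, sch h P s = Some nu -> conv_step P s nu.

(* contribution  Σ_i p_i μ_i + Σ_j p_j δ_{s_j}  of nu = Σ_i p_i <P_i,s_i> + Σ_j p_j s_j,
   where l enumerates the support of nu and mu x is the distribution attached to x *)
Definition combine (nu : X -> R) (l : list X) (mu : X -> St -> R) (t : St) : R :=
  sumR (map (fun x => nu x * match x with inl s' => delta s' t | inr _ => mu x t end) l).

Fixpoint bigstep (sch : scheduler) (n : nat) (h : hist) (P : prog) (s : St)
    (rho : St -> R) {struct n} : Prop :=
  match n with
  | O => forall t, rho t = 0
  | S n' =>
    exists (nu : X -> R) (ks : list (R * (X -> R) * list X * (X -> St -> R))),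
      sch h P s = Some nu /\
      Forall (fun k =>
        let '(pk, nuk, lk, muk) := k in
        0 <= pk /\ step P s nuk /\ enum_supp nuk lk /\
        forall P' s', In (inr (P', s')) lk ->
          bigstep sch n' (h ++ [((P, s), nuk)]) P' s' (muk (inr (P', s')))) ks /\
      sumR (map (fun k => let '(pk, _, _, _) := k in pk) ks) = 1 /\
      (forall x, nu x = sumR (map (fun k => let '(pk, nuk, _, _) := k in pk * nuk x) ks)) /\
      (forall t, rho t =
         sumR (map (fun k => let '(pk, nuk, lk, muk) := k in pk * combine nuk lk muk t) ks))
  end.

Fixpoint Fset (n : nat) (P : prog) (s : St) (rho : St -> R) {struct n} : Prop :=
  match n with
  | O => forall t, rho t = 0
  | S n' =>
    exists (nu : X -> R) (l : list X) (mu : X -> St -> R),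
      step P s nu /\ enum_supp nu l /\
      (forall P' s', In (inr (P', s')) l -> Fset n' P' s' (mu (inr (P', s')))) /\
      (forall t, rho t = combine nu l mu t)
  end.

End Lang.

Definition conv {Y : Type} (F : (Y -> R) -> Prop) (rho : Y -> R) : Prop :=
  exists ws : list (R * (Y -> R)),
    Forall (fun w => 0 <= fst w /\ F (snd w)) ws /\
    sumR (map fst ws) = 1 /\
    forall y, rho y = sumR (map (fun w => fst w * snd w y) ws).

(* A big-step run of length n+1 takes a
   convex combination of small steps and continues, from every reached configuration, with the
   scheduler below the extended history; by induction each continuation lies in conv F_n, and
   [combine] is affine in each continuation, so the result lies in conv F_(n+1).  Conversely, an
   element of conv F_(n+1) is a convex combination of steps whose continuations lie in F_n; after
   merging the steps with equal distributions, a scheduler is built by playing the combination at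
   the root and grafting, by induction, a scheduler for each continuation onto the histories that
   extend the root step. *)

From Pilot Require Import Defs.
From Stdlib Require Import Reals List QArith Qreals ClassicalEpsilon Permutation Lra Lia.
Import ListNotations.
Open Scope R_scope.

Lemma sumR_app l1 l2 : sumR (l1 ++ l2) = sumR l1 + sumR l2.
Proof. induction l1; simpl; [ring | rewrite IHl1; ring]. Qed.

Lemma sumR_map_ext {T} (f g : T -> R) l :
  (forall x, In x l -> f x = g x) -> sumR (map f l) = sumR (map g l).
Proof. intro H; now rewrite (map_ext_in f g l H). Qed.

Lemma sumR_map_plus {T} (f g : T -> R) l :
  sumR (map (fun x => f x + g x) l) = sumR (map f l) + sumR (map g l).
Proof. induction l; simpl; [ring | rewrite IHl; ring]. Qed.

Lemma sumR_map_scal {T} c (f : T -> R) l :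
  sumR (map (fun x => c * f x) l) = c * sumR (map f l).
Proof. induction l; simpl; [ring | rewrite IHl; ring]. Qed.

Lemma sumR_map_zero {T} (f : T -> R) l :
  (forall x, In x l -> f x = 0) -> sumR (map f l) = 0.
Proof. induction l; simpl; intros H; [ring |]. rewrite H, IHl; auto. ring. Qed.

Lemma sumR_perm l1 l2 : Permutation l1 l2 -> sumR l1 = sumR l2.
Proof. induction 1; simpl; lra. Qed.

Lemma sumR_flat_map {T U} (f : U -> R) (g : T -> list U) l :
  sumR (map f (flat_map g l)) = sumR (map (fun u => sumR (map f (g u))) l).
Proof. induction l; simpl; auto. now rewrite map_app, sumR_app, IHl. Qed.

Lemma NoDup_map_eq_in {T U} (f : T -> U) l a b :
  NoDup (map f l) -> In a l -> In b l -> f a = f b -> a = b.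
Proof.
  induction l as [| c l IH]; simpl; intros Hnd Ha Hb E; [contradiction |].
  inversion Hnd as [| ? ? Hc Hnd']; subst.
  destruct Ha as [<- | Ha], Hb as [<- | Hb]; auto.
  - contradict Hc. rewrite E. now apply in_map.
  - contradict Hc. rewrite <- E. now apply in_map.
Qed.

Section ConvexHull.
Variable Y : Type.
Implicit Types (F G : (Y -> R) -> Prop) (a b rho : Y -> R).

Lemma mem_conv F rho : F rho -> conv F rho.
Proof.
  intro H. exists [(1, rho)]. split; [| split].
  - constructor; [simpl; split; [lra | exact H] | constructor].
  - simpl; ring.
  - intro y; simpl; ring.
Qed.

Lemma conv_mono F G rho : (forall r, F r -> G r) -> conv F rho -> conv G rho.
Proof.
  intros H [ws [Hws [Hsum Hrho]]]. exists ws; repeat split; auto.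
  eapply Forall_impl; [| exact Hws]. intros w [? ?]; auto.
Qed.

(* The weight sums are left arbitrary so that the induction goes through. *)
Lemma conv_flatten F ws :
  Forall (fun w => 0 <= fst w /\ conv F (snd w)) ws ->
  exists vs, Forall (fun v => 0 <= fst v /\ F (snd v)) vs /\
    sumR (map fst vs) = sumR (map fst ws) /\
    forall y, sumR (map (fun v => fst v * snd v y) vs) = sumR (map (fun w => fst w * snd w y) ws).
Proof.
  induction ws as [| [c g] ws IH]; intros Hws.
  - exists []; simpl; auto.
  - inversion Hws as [| ? ? [Hc [us [Hus [Husum Hg]]]] Hws']; subst.
    destruct (IH Hws') as [vs [Hvs [Hvsum Hvval]]].
    exists (map (fun u => (c * fst u, snd u)) us ++ vs). split; [| split].
    + apply Forall_app; split; auto. apply Forall_map.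
      eapply Forall_impl; [| exact Hus]. intros u [? ?]; simpl; split; auto.
      now apply Rmult_le_pos.
    + rewrite map_app, sumR_app, map_map, Hvsum; simpl. now rewrite sumR_map_scal, Husum, Rmult_1_r.
    + intro y. rewrite map_app, sumR_app, map_map, Hvval; simpl. rewrite Hg, <- sumR_map_scal.
      f_equal. apply sumR_map_ext. intros; ring.
Qed.

Lemma conv_idem F rho : conv (conv F) rho -> conv F rho.
Proof.
  intros [ws [Hws [Hsum Hrho]]]. destruct (conv_flatten F ws Hws) as [vs [Hvs [Hvsum Hvval]]].
  exists vs; repeat split; auto; [congruence |]. intro y; now rewrite Hvval.
Qed.

Lemma conv_add F G a b : conv F a -> conv G b ->
  conv (fun r => exists f g, F f /\ G g /\ forall y, r y = f y + g y) (fun y => a y + b y).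
Proof.
  intros [ws [Hws [Hwsum Ha]]] [vs [Hvs [Hvsum Hb]]].
  exists (flat_map (fun w => map (fun v => (fst w * fst v, fun y => snd w y + snd v y)) vs) ws).
  rewrite Forall_forall in Hws, Hvs. split; [| split].
  - apply Forall_forall. intros u Hu. apply in_flat_map in Hu as [w [Hw Hu]].
    apply in_map_iff in Hu as [v [<- Hv]]. simpl.
    destruct (Hws w Hw), (Hvs v Hv). split; [now apply Rmult_le_pos |]. now exists (snd w), (snd v).
  - rewrite sumR_flat_map, <- Hwsum. apply sumR_map_ext. intros w _.
    rewrite map_map; simpl. now rewrite sumR_map_scal, Hvsum, Rmult_1_r.
  - intro y. rewrite sumR_flat_map, Ha, Hb.
    transitivity (sumR (map (fun w => fst w * snd w y
                                      + sumR (map (fun v => fst v * snd v y) vs) * fst w) ws)).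
    + rewrite sumR_map_plus, sumR_map_scal, Hwsum. ring.
    + apply sumR_map_ext. intros w _. rewrite map_map; simpl.
      transitivity (sumR (map (fun v => fst w * snd w y * fst v + fst w * (fst v * snd v y)) vs)).
      * rewrite sumR_map_plus, !sumR_map_scal, Hvsum. ring.
      * apply sumR_map_ext; intros; ring.
Qed.

Lemma conv_scale F c a :
  conv F a -> conv (fun r => exists f, F f /\ forall y, r y = c * f y) (fun y => c * a y).
Proof.
  intros [ws [Hws [Hsum Ha]]].
  exists (map (fun w => (fst w, fun y => c * snd w y)) ws). split; [| split].
  - apply Forall_map. eapply Forall_impl; [| exact Hws]. intros w [? ?]; split; eauto.
  - now rewrite map_map.
  - intro y; rewrite map_map; simpl. rewrite Ha, <- sumR_map_scal. apply sumR_map_ext; intros; ring.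
Qed.

End ConvexHull.

Section Semantics.
Variables (St A B : Type) (semA : A -> St -> St -> R) (semB : B -> St -> bool).
Local Notation X := (Defs.X St A B).
Local Notation prog := (Defs.prog A B).
Local Notation hist := (Defs.hist St A B).
Local Notation scheduler := (Defs.scheduler St A B).
Local Notation combine := (Defs.combine St A B).
Local Notation step := (Defs.step St A B semA semB).
Local Notation conv_step := (Defs.conv_step St A B semA semB).
Local Notation valid_scheduler := (Defs.valid_scheduler St A B semA semB).
Local Notation bigstep := (Defs.bigstep St A B semA semB).
Local Notation Fset := (Defs.Fset St A B semA semB).

Definition outcome (mu : X -> St -> R) (x : X) (t : St) : R :=
  match x with inl s' => delta s' t | inr _ => mu x t end.

Lemma combine_cons nu x l mu t :
  combine nu (x :: l) mu t = nu x * outcome mu x t + combine nu l mu t.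
Proof. reflexivity. Qed.

Lemma combine_ext nu l mu1 mu2 t :
  (forall x, In x l -> outcome mu1 x t = outcome mu2 x t) ->
  combine nu l mu1 t = combine nu l mu2 t.
Proof.
  intro H. apply sumR_map_ext. intros x Hx.
  specialize (H x Hx). unfold outcome in H. now rewrite H.
Qed.

Lemma combine_perm nu l1 l2 mu t : enum_supp nu l1 -> enum_supp nu l2 ->
  combine nu l1 mu t = combine nu l2 mu t.
Proof.
  intros [Hnd1 H1] [Hnd2 H2]. apply sumR_perm, Permutation_map, NoDup_Permutation; auto.
  intro x; rewrite H1, H2; tauto.
Qed.

Definition mix_children (a : R) (m1 : X -> St -> R) (w : R) (m2 : X -> St -> R) : X -> St -> R :=
  fun x t => (a * m1 x t + w * m2 x t) / (a + w).

Lemma combine_mix nu l m1 m2 a w t : a + w <> 0 ->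
  (a + w) * combine nu l (mix_children a m1 w m2) t = a * combine nu l m1 t + w * combine nu l m2 t.
Proof.
  intro H. unfold Defs.combine. rewrite <- !sumR_map_scal, <- sumR_map_plus.
  apply sumR_map_ext. intros [s' | c] _; unfold mix_children; simpl; field; auto.
Qed.

Definition children_in (F : prog -> St -> (St -> R) -> Prop) (l : list X) (mu : X -> St -> R) :=
  forall P' s', In (inr (P', s')) l -> F P' s' (mu (inr (P', s'))).

Definition combine_set (F : prog -> St -> (St -> R) -> Prop) (nu : X -> R) (l : list X)
    (rho : St -> R) : Prop :=
  exists mu, children_in F l mu /\ forall t, rho t = combine nu l mu t.

Definition branch_set (F : prog -> St -> (St -> R) -> Prop) (nu : X -> R) (x : X)
    (r : St -> R) : Prop :=
  exists mu, (forall P' s', x = inr (P', s') -> F P' s' (mu x)) /\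
    forall t, r t = nu x * outcome mu x t.

Lemma branch_conv F nu x m :
  (forall P' s', x = inr (P', s') -> conv (F P' s') (m x)) ->
  conv (branch_set F nu x) (fun t => nu x * outcome m x t).
Proof.
  destruct x as [s0 | [P0 s0]]; intro Hm.
  - apply mem_conv. exists m. split; [discriminate | reflexivity].
  - apply (conv_mono _ (fun r => exists f, F P0 s0 f /\ forall t, r t = nu (inr (P0, s0)) * f t)).
    + intros r [f [Hf Hr]]. exists (fun _ => f).
      split; [intros P' s' E; injection E as <- <-; exact Hf | exact Hr].
    + exact (conv_scale _ _ _ _ (Hm P0 s0 eq_refl)).
Qed.

Lemma combine_set_cons F nu x l f g : ~ In x l ->
  branch_set F nu x f -> combine_set F nu l g -> combine_set F nu (x :: l) (fun t => f t + g t).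
Proof.
  intros Hx [mu1 [Hmu1 Hf]] [mu2 [Hmu2 Hg]].
  exists (fun y => if excluded_middle_informative (y = x) then mu1 y else mu2 y). split.
  - intros P' s' Hin. destruct (excluded_middle_informative _) as [E | N].
    + subst x. now apply Hmu1.
    + destruct Hin as [E | Hin]; [now contradiction N | now apply Hmu2].
  - intro t. rewrite combine_cons, Hf, Hg. f_equal.
    + destruct x; simpl; auto. now destruct (excluded_middle_informative _).
    + apply combine_ext. intros [y | y] Hy; simpl; auto.
      destruct (excluded_middle_informative _) as [E | _]; [subst x; contradiction | reflexivity].
Qed.

Lemma combine_conv F nu l m : NoDup l ->
  children_in (fun P' s' => conv (F P' s')) l m ->
  conv (combine_set F nu l) (fun t => combine nu l m t).
Proof.
  induction l as [| x l IH]; intros Hnd Hm.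
  - apply mem_conv. exists m. split; [intros ? ? [] | reflexivity].
  - inversion Hnd as [| ? ? Hx Hnd']; subst.
    change (conv (combine_set F nu (x :: l))
              (fun t => (fun t => nu x * outcome m x t) t + (fun t => combine nu l m t) t)).
    eapply conv_mono; [| apply conv_add; [apply branch_conv | apply IH]].
    + intros r [f [g [Hf [Hg Hr]]]].
      destruct (combine_set_cons F nu x l f g Hx Hf Hg) as [mu [Hmu Hfg]].
      exists mu. split; [exact Hmu |]. intro t. now rewrite Hr, Hfg.
    + intros P' s' ->. apply Hm. now left.
    + exact Hnd'.
    + intros P' s' Hin. apply Hm. now right.
Qed.

(* A weighted step of the root together with its continuation results: [(p_k, nu_k, l_k, mu_k)]
   as in the definition of [bigstep]. *)
Definition branch : Type := (R * (X -> R) * list X * (X -> St -> R))%type.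

Definition branch_nu (e : branch) : X -> R := let '(_, nu, _, _) := e in nu.

Definition branch_weight (nl : list branch) : R :=
  sumR (map (fun e : branch => let '(a, _, _, _) := e in a) nl).

Definition branch_dist (nl : list branch) (x : X) : R :=
  sumR (map (fun e : branch => let '(a, nu, _, _) := e in a * nu x) nl).

Definition branch_value (nl : list branch) (t : St) : R :=
  sumR (map (fun e : branch => let '(a, nu, l, m) := e in a * combine nu l m t) nl).

Lemma bigstep_conv_Fset n : forall sch h P s rho, bigstep sch n h P s rho -> conv (Fset n P s) rho.
Proof.
  induction n as [| n IH]; intros sch h P s rho Hbs.
  - now apply mem_conv.
  - destruct Hbs as [nu [ks [_ [Hks [Hsum [_ Hrho]]]]]].
    apply conv_idem.
    exists (map (fun k : branch => let '(pk, nuk, lk, muk) := k in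
                                   (pk, fun t => combine nuk lk muk t)) ks).
    split; [| split].
    + apply Forall_map. eapply Forall_impl; [| exact Hks].
      intros [[[pk nuk] lk] muk] [Hpk [Hst [He Hch]]]. split; [exact Hpk |].
      apply (conv_mono _ (combine_set (Fset n) nuk lk)).
      * intros r [mu [Hmu Hr]]. exists nuk, lk, mu. auto.
      * apply combine_conv; [apply He |]. intros P' s' Hin. eapply IH, Hch, Hin.
    + rewrite map_map, <- Hsum. f_equal. apply map_ext. now intros [[[? ?] ?] ?].
    + intro t. rewrite Hrho, map_map. f_equal. apply map_ext. now intros [[[? ?] ?] ?].
Qed.

Definition in_subtree (h : hist) (P : prog) (s : St) (h' : hist) (Q : prog) (t : St) : Prop :=
  (h' = h /\ Q = P /\ t = s) \/ exists nu r, h' = h ++ ((P, s), nu) :: r.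

Lemma bigstep_subtree_ext n : forall (sch1 sch2 : scheduler) h P s rho,
  (forall h' Q t, in_subtree h P s h' Q t -> sch1 h' Q t = sch2 h' Q t) ->
  bigstep sch1 n h P s rho -> bigstep sch2 n h P s rho.
Proof.
  induction n as [| n IH]; intros sch1 sch2 h P s rho Hagree Hbs; [exact Hbs |].
  destruct Hbs as [nu [ks [Hsch [Hks Hrest]]]].
  exists nu, ks. split; [rewrite <- Hagree; [exact Hsch | now left] |]. split; [| exact Hrest].
  eapply Forall_impl; [| exact Hks].
  intros [[[pk nuk] lk] muk] [Hpk [Hst [He Hch]]].
  split; [exact Hpk | split; [exact Hst | split; [exact He |]]].
  intros P' s' Hin. eapply IH; [| apply Hch, Hin].
  intros h' Q t [[-> [-> ->]] | [nu' [r ->]]]; apply Hagree; right.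
  - now exists nuk, [].
  - exists nuk, (((P', s'), nu') :: r). now rewrite <- app_assoc.
Qed.

(* The configuration a subtree was entered at: the first one recorded after the root step, or
   the current one if nothing has been recorded since. *)
Definition entry_config (r : hist) (Q : prog) (t : St) : prog * St :=
  match r with [] => (Q, t) | (c, _) :: _ => c end.

Definition graft (h : hist) (P : prog) (s : St) (root : X -> R)
    (child : (X -> R) -> prog * St -> scheduler) : scheduler :=
  fun h' Q t =>
  if excluded_middle_informative (h' = h /\ Q = P /\ t = s) then Some root else
  match skipn (length h) h' with
  | (c, nu) :: r =>
      if excluded_middle_informative (firstn (length h) h' = h /\ c = (P, s))
      then child nu (entry_config r Q t) h' Q t else None
  | [] => None
  end.

Section Graft.
Variables (h : hist) (P : prog) (s : St) (root : X -> R)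
  (child : (X -> R) -> prog * St -> scheduler).

Lemma graft_root : graft h P s root child h P s = Some root.
Proof.
  unfold graft.
  destruct (excluded_middle_informative _) as [_ | N]; [reflexivity | now contradict N].
Qed.

Lemma graft_subtree nu r Q t :
  graft h P s root child (h ++ ((P, s), nu) :: r) Q t =
  child nu (entry_config r Q t) (h ++ ((P, s), nu) :: r) Q t.
Proof.
  unfold graft. destruct (excluded_middle_informative _) as [[Hlen _] | _].
  - apply (f_equal (@length _)) in Hlen. rewrite length_app in Hlen. simpl in Hlen. lia.
  - rewrite skipn_app, firstn_app, skipn_all, firstn_all, Nat.sub_diag, app_nil_r. simpl.
    destruct (excluded_middle_informative _) as [_ | N]; [reflexivity | now contradict N].
Qed.

Lemma graft_valid : conv_step P s root -> (forall nu c, valid_scheduler (child nu c)) ->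
  valid_scheduler (graft h P s root child).
Proof.
  intros Hroot Hchild h' Q t nu' Hsch. unfold graft in Hsch.
  destruct (excluded_middle_informative _) as [[-> [-> ->]] | _].
  - now injection Hsch as <-.
  - destruct (skipn (length h) h') as [| [c nu] r]; [discriminate |].
    destruct (excluded_middle_informative _); [eapply Hchild, Hsch | discriminate].
Qed.

Lemma bigstep_graft n nu P' s' rho :
  bigstep (child nu (P', s')) n (h ++ [((P, s), nu)]) P' s' rho ->
  bigstep (graft h P s root child) n (h ++ [((P, s), nu)]) P' s' rho.
Proof.
  apply bigstep_subtree_ext.
  intros h' Q t [[-> [-> ->]] | [nu' [r ->]]].
  - now rewrite graft_subtree.
  - rewrite <- app_assoc. simpl. now rewrite graft_subtree.
Qed.

End Graft.

Definition good_branch (n : nat) (P : prog) (s : St) (e : branch) : Prop :=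
  let '(a, nu, l, m) := e in
  0 <= a /\ step P s nu /\ enum_supp nu l /\ children_in (fun P' s' => conv (Fset n P' s')) l m.

Lemma branch_dist_conv_step n P s nl :
  Forall (good_branch n P s) nl -> branch_weight nl = 1 -> conv_step P s (branch_dist nl).
Proof.
  intros Hnl Hw. exists (map (fun e : branch => let '(a, nu, _, _) := e in (a, nu)) nl).
  split; [| split].
  - apply Forall_map. eapply Forall_impl; [| exact Hnl]. now intros [[[a nu] l] m] [? [? _]].
  - rewrite map_map, <- Hw. apply sumR_map_ext. now intros [[[? ?] ?] ?].
  - intro x. rewrite map_map. apply sumR_map_ext. now intros [[[? ?] ?] ?].
Qed.

Lemma merge_branch n P s a w nu le l me mu :
  good_branch n P s (a, nu, le, me) -> 0 <= w -> w <> 0 -> enum_supp nu l ->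
  children_in (Fset n) l mu ->
  good_branch n P s (a + w, nu, le, mix_children a me w mu) /\
  forall t, (a + w) * combine nu le (mix_children a me w mu) t =
            a * combine nu le me t + w * combine nu l mu t.
Proof.
  intros [Ha [Hst [Hle Hme]]] Hw Hw0 Hl Hmu.
  assert (Haw : 0 < a + w) by lra.
  split; [split; [lra | split; [exact Hst | split; [exact Hle |]]] |].
  - intros P' s' Hin. apply conv_idem.
    exists [(a / (a + w), me (inr (P', s'))); (w / (a + w), mu (inr (P', s')))].
    split; [| split].
    + constructor; [| constructor; [| constructor]]; simpl; split;
        try (apply Rle_mult_inv_pos; lra).
      * now apply Hme.
      * apply mem_conv, Hmu, (proj2 Hl), (proj2 Hle), Hin.
    + simpl. field. lra.
    + intro t. unfold mix_children. simpl. field. lra.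
  - intro t. rewrite combine_mix by lra. now rewrite (combine_perm nu l le mu t Hl Hle).
Qed.

Lemma insert_branch n P s nl w nu l mu :
  Forall (good_branch n P s) nl -> NoDup (map branch_nu nl) ->
  0 <= w -> step P s nu -> enum_supp nu l -> children_in (Fset n) l mu ->
  exists nl', Forall (good_branch n P s) nl' /\ NoDup (map branch_nu nl') /\
    branch_weight nl' = w + branch_weight nl /\
    forall t, branch_value nl' t = w * combine nu l mu t + branch_value nl t.
Proof.
  intros Hnl Hnd Hw Hst Hl Hmu.
  destruct (Req_dec w 0) as [-> | Hw0].
  { exists nl. repeat split; auto; [ring | intro t; ring]. }
  destruct (excluded_middle_informative (exists e, In e nl /\ branch_nu e = nu))
    as [[[[[a nu'] le] me] [Hin Hnu]] | Hnew].
  - simpl in Hnu; subst nu'. apply in_split in Hin as [nl1 [nl2 ->]].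
    apply Forall_app in Hnl as [Hnl1 Hnl2]. inversion Hnl2 as [| ? ? Hgood Hnl2']; subst.
    destruct (merge_branch n P s a w nu le l me mu Hgood Hw Hw0 Hl Hmu) as [Hgood' Hval].
    exists (nl1 ++ (a + w, nu, le, mix_children a me w mu) :: nl2). split; [| split; [| split]].
    + apply Forall_app; auto.
    + rewrite map_app in *. exact Hnd.
    + unfold branch_weight. rewrite !map_app, !sumR_app. simpl. ring.
    + intro t. unfold branch_value. rewrite !map_app, !sumR_app. simpl. rewrite Hval. ring.
  - exists ((w, nu, l, mu) :: nl). split; [| split; [| split]].
    + constructor; [| exact Hnl].
      split; [exact Hw | split; [exact Hst | split; [exact Hl |]]].
      intros P' s' Hin. now apply mem_conv, Hmu.
    + constructor; [| exact Hnd]. intros Hin.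
      apply in_map_iff in Hin as [e [He Hin]]. apply Hnew. now exists e.
    + reflexivity.
    + reflexivity.
Qed.

(* Branches with the same step distribution lead to identical histories, so a scheduler cannot
   tell them apart; they are merged, mixing their continuation results. *)
Lemma merge_branches n P s ws :
  Forall (fun w => 0 <= fst w /\ Fset (S n) P s (snd w)) ws ->
  exists nl, Forall (good_branch n P s) nl /\ NoDup (map branch_nu nl) /\
    branch_weight nl = sumR (map fst ws) /\
    forall t, branch_value nl t = sumR (map (fun w => fst w * snd w t) ws).
Proof.
  induction ws as [| [w r] ws IH]; intros Hws.
  - exists []. repeat split; constructor.
  - inversion Hws as [| ? ? [Hw [nu [l [mu [Hst [Hl [Hmu Hr]]]]]]] Hws']; subst.
    destruct (IH Hws') as [nl [Hnl [Hnd [Hwt Hval]]]].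
    destruct (insert_branch n P s nl w nu l mu Hnl Hnd Hw Hst Hl Hmu)
      as [nl' [Hnl' [Hnd' [Hwt' Hval']]]].
    exists nl'. split; [| split; [| split]]; auto.
    + rewrite Hwt', Hwt. reflexivity.
    + intro t. rewrite Hval', Hval. simpl. now rewrite Hr.
Qed.

Definition idle_scheduler : scheduler := fun _ _ _ => None.

Lemma idle_scheduler_valid : valid_scheduler idle_scheduler.
Proof. intros ? ? ? ? H. discriminate H. Qed.

Definition child_ok (n : nat) (h : hist) (P : prog) (s : St) (nl : list branch)
    (nu : X -> R) (c : prog * St) (sc : scheduler) : Prop :=
  valid_scheduler sc /\ forall a l m, In (a, nu, l, m) nl -> In (inr c) l ->
    bigstep sc n (h ++ [((P, s), nu)]) (fst c) (snd c) (m (inr c)).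

Lemma child_schedulers n h P s nl :
  (forall h' P' s' rho, conv (Fset n P' s') rho ->
     exists sc, valid_scheduler sc /\ bigstep sc n h' P' s' rho) ->
  Forall (good_branch n P s) nl -> NoDup (map branch_nu nl) ->
  exists child, forall nu c, child_ok n h P s nl nu c (child nu c).
Proof.
  intros Hind Hnl Hnd.
  assert (Hex : forall nc, exists sc, child_ok n h P s nl (fst nc) (snd nc) sc).
  { intros [nu [P' s']]; simpl.
    destruct (excluded_middle_informative
                (exists a l m, In (a, nu, l, m) nl /\ In (inr (P', s')) l))
      as [[a [l [m [Hin Hc]]]] | Hnone].
    - rewrite Forall_forall in Hnl. destruct (Hnl _ Hin) as [_ [_ [_ Hm]]].
      destruct (Hind (h ++ [((P, s), nu)]) P' s' _ (Hm P' s' Hc)) as [sc [Hv Hbs]].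
      exists sc. split; [exact Hv |]. intros a' l' m' Hin' _.
      assert (E : (a', nu, l', m') = (a, nu, l, m)) by now apply (NoDup_map_eq_in branch_nu nl).
      injection E as -> -> ->. exact Hbs.
    - exists idle_scheduler. split; [exact idle_scheduler_valid |].
      intros a l m Hin Hc. contradict Hnone. eauto. }
  destruct (ClassicalEpsilon.choice _ Hex) as [f Hf].
  exists (fun nu c => f (nu, c)). intros nu c. exact (Hf (nu, c)).
Qed.

Lemma conv_Fset_bigstep n : forall h P s rho, conv (Fset n P s) rho ->
  exists sch, valid_scheduler sch /\ bigstep sch n h P s rho.
Proof.
  induction n as [| n IH]; intros h P s rho [ws [Hws [Hsum Hrho]]].
  - exists idle_scheduler. split; [exact idle_scheduler_valid |].
    intro t. rewrite Hrho. apply sumR_map_zero. intros w Hw.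
    rewrite Forall_forall in Hws. destruct (Hws w Hw) as [_ Hzero]. simpl in Hzero.
    rewrite Hzero. ring.
  - destruct (merge_branches n P s ws Hws) as [nl [Hnl [Hnd [Hwt Hval]]]]. rewrite Hsum in Hwt.
    destruct (child_schedulers n h P s nl IH Hnl Hnd) as [child Hchild].
    exists (graft h P s (branch_dist nl) child). split.
    + apply graft_valid; [exact (branch_dist_conv_step n P s nl Hnl Hwt) | apply Hchild].
    + exists (branch_dist nl), nl.
      split; [apply graft_root |]. split; [| split; [exact Hwt | split; [reflexivity |]]].
      * rewrite Forall_forall in Hnl |- *. intros [[[a nu] l] m] Hin.
        destruct (Hnl _ Hin) as [Ha [Hst [Hl _]]].
        split; [exact Ha | split; [exact Hst | split; [exact Hl |]]].
        intros P' s' Hc. apply bigstep_graft. exact (proj2 (Hchild nu (P', s')) a l m Hin Hc).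
      * intro t. rewrite Hrho, <- Hval. reflexivity.
Qed.

End Semantics.

Theorem theorem5 (St A B : Type) (semA : A -> St -> St -> R) (semB : B -> St -> bool)
  (HsemA : forall a s, is_fdist (semA a s))
  (P : prog A B) (s : St) (n : nat) (rho : St -> R) :
  conv (Fset St A B semA semB n P s) rho <->
  exists sch : scheduler St A B,
    valid_scheduler St A B semA semB sch /\ bigstep St A B semA semB sch n nil P s rho.
Proof.
  split.
  - apply conv_Fset_bigstep.
  - intros [sch [_ Hbs]]. exact (bigstep_conv_Fset St A B semA semB n sch nil P s rho Hbs).
Qed.
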